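(* Let $T:M_d\to M_d$ be a completely positive map with $T(I)\le I$, whose stabilization index $n_T$ is finite. If $T$ is corner-faithful, then $T$ is unital, i.e. $T(I)=I$.
   Context: $M_d$ is the algebra of complex $d\times d$ matrices with the positive semidefinite order. The defect is $d(T)=I-T(I)\ge 0$. The stabilization index is $n_T=\min\{n\ge1: T^n(d(T))=0\}$ (with $T^0=\mathrm{id}$). For a positive semidefinite $x$, $\mathrm{supp}(x)$ denotes the orthogonal projection onto the range of $x$. When $n_T<\infty$, the orbit-support projection is $Q_T=\bigvee_{k<n_T}\mathrm{supp}(T^k(d(T)))$. $T$ is corner-faithful if for every $x\ge0$ with $x\neq0$ and $\mathrm{supp}(x)\le Q_T$ one has $T(x)\ne 0$. *)

From HB Require Import structures.
From mathcomp Require Import all_boot all_order all_algebra.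
From mathcomp Require Import complex reals.
From Stdlib Require Import ClassicalEpsilon.
Set Implicit Arguments. Unset Strict Implicit. Unset Printing Implicit Defensive.
Import Order.TTheory GRing.Theory Num.Theory.
Local Open Scope ring_scope.

Section MdDefs.
Variable R : realType.
Local Notation C := R[i].

Definition adj m n (A : 'M[C]_(m, n)) : 'M[C]_(n, m) := (map_mx conjc A)^T.

Definition psd n (A : 'M[C]_n) : Prop :=
  adj A = A /\ forall v : 'cV[C]_n, 0 <= (adj v *m A *m v) 0 0.

Definition lemx n (A B : 'M[C]_n) : Prop := psd (B - A).

Definition is_proj n (P : 'M[C]_n) : Prop := adj P = P /\ P *m P = P.

(* ampliation id_{M_n} (x) T acting on n x n block matrices with d x d blocks *)
Definition ampl d (T : 'M[C]_d -> 'M[C]_d) (n : nat)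
  (X : 'M[C]_(\sum_(i < n) (fun _ : 'I_n => d) i)) :
  'M[C]_(\sum_(i < n) (fun _ : 'I_n => d) i) :=
  \mxblock_(i < n, j < n) T (submxblock X i j).

Definition completely_positive d (T : {linear 'M[C]_d -> 'M[C]_d}) : Prop :=
  forall (n : nat) (X : 'M[C]_(\sum_(i < n) (fun _ : 'I_n => d) i)),
    psd X -> psd (ampl T X).

Definition defect d (T : 'M[C]_d -> 'M[C]_d) : 'M[C]_d := 1%:M - T 1%:M.

Definition stab_index d (T : 'M[C]_d -> 'M[C]_d) (n : nat) : Prop :=
  (0 < n)%N /\ iter n T (defect T) = 0 /\
  forall m : nat, (0 < m)%N -> iter m T (defect T) = 0 -> (n <= m)%N.

(* P is the orthogonal projection onto the range (column space) of x *)
Definition is_supp d (x P : 'M[C]_d) : Prop :=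
  is_proj P /\ (P^T == x^T)%MS.

(* supp(x): the orthogonal projection onto the range of x (chosen by epsilon;
   it exists and is unique) *)
Definition supp d (x : 'M[C]_d) : 'M[C]_d :=
  epsilon (inhabits 0) (fun P => is_supp x P).

Definition is_proj_join d n (F : nat -> 'M[C]_d) (P : 'M[C]_d) : Prop :=
  is_proj P /\ (forall k, (k < n)%N -> lemx (F k) P) /\
  forall Q, is_proj Q -> (forall k, (k < n)%N -> lemx (F k) Q) -> lemx P Q.

Definition proj_join d n (F : nat -> 'M[C]_d) : 'M[C]_d :=
  epsilon (inhabits 0) (fun P => is_proj_join n F P).

Definition orbit_supp d (T : 'M[C]_d -> 'M[C]_d) (n : nat) : 'M[C]_d :=
  proj_join n (fun k => supp (iter k T (defect T))).

Definition corner_faithful d (T : 'M[C]_d -> 'M[C]_d) (n : nat) : Prop :=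
  forall x : 'M[C]_d, psd x -> x <> 0 -> lemx (supp x) (orbit_supp T n) ->
    T x <> 0.

End MdDefs.

From HB Require Import structures.
From mathcomp Require Import all_boot all_order all_algebra.
From mathcomp Require Import complex reals.
From Stdlib Require Import ClassicalEpsilon.
Set Implicit Arguments. Unset Strict Implicit. Unset Printing Implicit Defensive.
Import Order.TTheory GRing.Theory Num.Theory.
Local Open Scope ring_scope.

(* Complete positivity enters only through positivity, so every iterate
   T^k(d(T)) is positive semidefinite.  The last iterate x = T^(n_T - 1)(d(T))
   satisfies T x = 0 and supp x <= Q_T, so corner-faithfulness forces x = 0;
   minimality of n_T then leaves n_T = 1, i.e. d(T) = 0.  Since supp and Q_T
   are defined by choice, the real work is their existence: the range
   projection of X is M (M^* M)^-1 M^* for a column basis M of its range, and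
   a join of projections is the range projection of the sum of their ranges. *)

Section PsdProjections.
Variable R : realType.
Local Notation C := R[i].

Lemma map_conj_mxK m n (A : 'M[C]_(m, n)) : map_mx conjc (map_mx conjc A) = A.
Proof. by rewrite -map_mx_comp; apply: map_mx_id => x /=; rewrite conjcK. Qed.

Lemma adjK m n (A : 'M[C]_(m, n)) : adj (adj A) = A.
Proof. by rewrite /adj map_trmx trmxK map_conj_mxK. Qed.

Lemma adjM m n p (A : 'M[C]_(m, n)) (B : 'M[C]_(n, p)) :
  adj (A *m B) = adj B *m adj A.
Proof. by rewrite /adj map_mxM trmx_mul. Qed.

Lemma adjB m n (A B : 'M[C]_(m, n)) : adj (A - B) = adj A - adj B.
Proof. by rewrite /adj map_mxB linearB. Qed.

Lemma adj1 n : adj (1%:M : 'M[C]_n) = 1%:M.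
Proof. by rewrite /adj map_mx1 trmx1. Qed.

Lemma adj_eq0 m n (A : 'M[C]_(m, n)) : adj A = 0 -> A = 0.
Proof. by move=> A0; rewrite -(adjK A) A0 /adj map_mx0 trmx0. Qed.

Lemma adj_mulmx_ge0 m n (A : 'M[C]_(m, n)) i : 0 <= (adj A *m A) i i.
Proof.
by rewrite !mxE; apply: sumr_ge0 => j _; rewrite !mxE mulrC mulcJ_ge0.
Qed.

Lemma adj_mulmx_cV_eq0 n (u : 'cV[C]_n) : (adj u *m u) 0 0 = 0 -> u = 0.
Proof.
rewrite !mxE => /eqP; rewrite psumr_eq0 => [/allP u0|j _]; last first.
  by rewrite !mxE mulrC mulcJ_ge0.
apply/matrixP => j k; rewrite (ord1 k) mxE.
move: (u0 j (mem_index_enum _)).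
by rewrite /= !mxE mulf_eq0 conjc_eq0 orbb => /eqP.
Qed.

Lemma mulmx_cV_eq0 m n (A : 'M[C]_(m, n)) :
  (forall w : 'cV[C]_n, A *m w = 0) -> A = 0.
Proof.
move=> A0; apply/matrixP => i j.
by have /matrixP/(_ i 0) := A0 (delta_mx j 0); rewrite -colE !mxE.
Qed.

Lemma psd_conj m n (S : 'M[C]_(m, n)) (Y : 'M[C]_n) :
  psd Y -> psd (S *m Y *m adj S).
Proof.
move=> [hY Y_ge0]; split; first by rewrite !adjM adjK hY mulmxA.
move=> v; rewrite (_ : _ *m v = adj (adj S *m v) *m Y *m (adj S *m v)) //.
by rewrite adjM adjK !mulmxA.
Qed.

Lemma proj_psd n (P : 'M[C]_n) : is_proj P -> psd P.
Proof.
move=> [hP PP]; split=> // v.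
rewrite (_ : _ *m v = adj (P *m v) *m (P *m v)) ?adj_mulmx_ge0 //.
by rewrite adjM hP mulmxA -(mulmxA _ P P) PP.
Qed.

Lemma proj_lemxP n (E Q : 'M[C]_n) :
  is_proj E -> is_proj Q -> lemx E Q <-> Q *m E = E.
Proof.
move=> [hE EE] [hQ QQ]; split=> [[_ QE_ge0] | QE]; last first.
  have EQ : E *m Q = E by rewrite -{1}hE -hQ -adjM QE hE.
  apply: proj_psd; split; first by rewrite adjB hE hQ.
  by rewrite mulmxBl !mulmxBr QQ QE EQ EE subrr subr0.
(* K^* K = E (1 - Q) E = - E (Q - E) E is both psd and nsd. *)
set K := (1%:M - Q) *m E.
suff K0 : K = 0.
  by apply/eqP; rewrite eq_sym -subr_eq0 -[E in E - _]mul1mx -mulmxBl -/K K0.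
apply: mulmx_cV_eq0 => v; apply: adj_mulmx_cV_eq0; apply/eqP.
rewrite eq_le adj_mulmx_ge0 andbT.
have -> : adj (K *m v) *m (K *m v) = - (adj (E *m v) *m (Q - E) *m (E *m v)).
  rewrite !adjM adjB adj1 hE hQ !mulmxA !mulmxBr !mulmxBl !mulmx1 -!mulmxA.
  by rewrite !(mulmxA E E, EE) (mulmxA Q Q) QQ subrr subr0 opprB.
by rewrite mxE oppr_le0 QE_ge0.
Qed.

Lemma proj_mulmx_idP m n (Q : 'M[C]_m) (Y : 'M[C]_(m, n)) :
  is_proj Q -> Q *m Y = Y <-> (Y^T <= Q^T)%MS.
Proof.
move=> [_ QQ]; split=> [<- | /submxP[D YD]]; first by rewrite trmx_mul submxMl.
by rewrite -(trmxK Y) YD trmx_mul trmxK mulmxA QQ.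
Qed.

Lemma adj_mulmx_unit m n (M : 'M[C]_(m, n)) :
  row_free M^T -> adj M *m M \in unitmx.
Proof.
move=> freeM; rewrite -row_free_unit; apply: inj_row_free => v vG.
have vM0 : v *m adj M = 0.
  apply: adj_eq0; apply: adj_mulmx_cV_eq0.
  by rewrite adjK adjM adjK mulmxA -(mulmxA v) vG mul0mx mxE.
have := congr1 (map_mx conjc) vM0.
rewrite map_mxM /adj map_trmx map_conj_mxK map_mx0 -(mul0mx _ M^T).
by move/(row_free_inj freeM) => v0; rewrite -[v]map_conj_mxK v0 map_mx0.
Qed.

Lemma range_proj_exists m n (X : 'M[C]_(m, n)) :
  exists P : 'M[C]_m, is_proj P /\ (P^T == X^T)%MS.
Proof.
set B := row_base X^T; set M := B^T; set G := adj M *m M.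
have MB : M^T = B by rewrite trmxK.
have hG : adj G = G by rewrite /G adjM adjK.
have uG : G \in unitmx by apply: adj_mulmx_unit; rewrite MB row_base_free.
set P := M *m invmx G *m adj M.
have PM : P *m M = M by rewrite /P -mulmxA -/G -mulmxA mulVmx // mulmx1.
exists P; split; first split.
- by rewrite !adjM adjK /adj map_invmx trmx_inv -/(adj G) hG mulmxA.
- by rewrite {2}/P !mulmxA PM.
apply/andP; split; rewrite -(eq_row_base X^T) -/B.
  by rewrite /P !trmx_mul mulmxA MB submxMl.
by rewrite -{1}MB -PM trmx_mul MB submxMl.
Qed.

Lemma proj_join_exists m n (F : nat -> 'M[C]_m) :
  (forall k, (k < n)%N -> is_proj (F k)) -> exists P, is_proj_join n F P.
Proof.
move=> projF.
have [P [projP]] := range_proj_exists ((\sum_(k < n) (F k)^T)%MS)^T.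
rewrite trmxK => /eqmxP rangeP.
exists P; split=> //; split=> [k kn | Q projQ FQ].
  apply/proj_lemxP => //; first exact: projF.
  by apply/(proj_mulmx_idP _ projP); rewrite rangeP (sumsmx_sup (Ordinal kn)).
apply/proj_lemxP => //; apply/(proj_mulmx_idP _ projQ); rewrite rangeP.
apply/sumsmx_subP => k _; apply/(proj_mulmx_idP _ projQ).
by apply/proj_lemxP; [exact: projF | | exact: FQ].
Qed.

Lemma psd_mxsub m n (f : 'I_m -> 'I_n) (Y : 'M[C]_n) :
  psd Y -> psd (mxsub f f Y).
Proof.
have -> : mxsub f f Y = rowsub f 1%:M *m Y *m adj (rowsub f 1%:M).
  have -> : mxsub f f Y = colsub f (rowsub f Y) by apply/matrixP => i j; rewrite !mxE.
  by rewrite rowsubE /adj map_mxsub map_mx1 trmx_mxsub trmx1 mulmx_colsub mulmx1.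
exact: psd_conj.
Qed.

Lemma psd_castmx m n (e : m = n) (A : 'M[C]_m) : psd A -> psd (castmx (e, e) A).
Proof. by rewrite castmxEsub; apply: psd_mxsub. Qed.

Lemma cp_psd d (T : {linear 'M[C]_d -> 'M[C]_d}) (A : 'M[C]_d) :
  completely_positive T -> psd A -> psd (T A).
Proof.
(* A 1 x 1 block matrix is its block, up to a cast of the dimension. *)
move=> cpT psdA.
have psdX : psd (\mxblock_(i < 1, j < 1) A).
  have := psd_castmx (esym (@big_ord1 nat 0%N addn (fun=> d))) psdA.
  by rewrite {1}[A]mxEmxblock castmxK.
rewrite [T A]mxEmxblock; apply: psd_castmx.
have -> : \mxblock_(i < 1, j < 1) T A = ampl T (\mxblock_(i < 1, j < 1) A).
  by apply/mxblockP => i j; rewrite /ampl !mxblockK.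
exact: cpT.
Qed.

Lemma psd_iter_defect d (T : {linear 'M[C]_d -> 'M[C]_d}) k :
  completely_positive T -> lemx (T 1%:M) 1%:M -> psd (iter k T (defect T)).
Proof. by move=> cpT T1_le; elim: k => [|k IH] //=; apply: cp_psd. Qed.

Lemma supp_spec d (x : 'M[C]_d) : is_supp x (supp x).
Proof. by apply: epsilon_spec; apply: range_proj_exists. Qed.

Lemma supp_iter_le_orbit_supp d (T : 'M[C]_d -> 'M[C]_d) n k :
  (k < n)%N -> lemx (supp (iter k T (defect T))) (orbit_supp T n).
Proof.
have [_ [ub _]] : is_proj_join n (fun k => supp (iter k T (defect T))) (orbit_supp T n).
  by apply: epsilon_spec; apply: proj_join_exists => j _; apply: (supp_spec _).1.
exact: ub.
Qed.

End PsdProjections.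

Theorem theorem4p16 (R : realType) (d : nat)
  (T : {linear 'M[R[i]]_d -> 'M[R[i]]_d}) (nT : nat) :
  completely_positive T ->
  lemx (T 1%:M) 1%:M ->
  stab_index T nT ->
  corner_faithful T nT ->
  T 1%:M = 1%:M.
Proof.
move=> cpT T1_le [nT_gt0 [iter_nT0 nT_min]] faithT.
set x := iter nT.-1 T (defect T).
have Tx0 : T x = 0 by rewrite /x -iterS prednK.
have x0 : x = 0.
  case: (eqVneq x 0) => // /eqP x_neq0; exfalso.
  apply: (faithT x _ x_neq0 _ Tx0); first exact: psd_iter_defect.
  by apply: supp_iter_le_orbit_supp; rewrite prednK.
have nT_eq1 : nT.-1 = 0%N.
  apply/eqP; rewrite -leqn0 leqNgt; apply/negP => nT_gt1.
  by have := nT_min _ nT_gt1 x0; rewrite leqNgt ltn_predL nT_gt0.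
by move: x0; rewrite /x nT_eq1 => /eqP; rewrite subr_eq0 => /eqP <-.
Qed.
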